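(* Let $\mathbb{F}$ be a field, $d\ge 1$, and $P_d=\mathbb{F}[x_1,\dots,x_d]$. For $k\ge 3$ let $D_k$ be the set of monomials of degree $k$ in $x_1,\dots,x_{k-1}$ not divisible by $x_{k-1}^2$ (if $d<k-1$, $D_k$ is the set of all monomials of degree $k$ in $x_1,\dots,x_d$), and let $K_d\subseteq P_d$ be the ideal generated by $x_1^3,\dots,x_d^3$ and $\bigcup_{k=3}^{d+1}D_k$. Let $\mu\in P_d$ be a monomial. (a) If $\mu\notin K_d$ and $\deg(\mu)\le d-1$, then there exists a monomial $\widetilde\mu\in P_d$ that is a multiple of $\mu$ of degree $d$, with $\widetilde\mu\notin K_d$, and such that $\widetilde\mu$ ends in $x_d$ or in $x_d^2$. (b) If $\mu\notin K_d$, $\deg(\mu)=d$, and $\mu$ does not end in $x_{d-1}^2$, then there exists a monomial $\widetilde\mu\in P_d$ that is a multiple of $\mu$ of degree $d+1$ with $\widetilde\mu\notin K_d$.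
   Context: A monomial $m$ is said to end in $x_j^{e}$ if $m=x_1^{a_1}\cdots x_{j-1}^{a_{j-1}}x_j^{e}$, i.e. $m$ involves no variable $x_i$ with $i>j$ and the exponent of $x_j$ in $m$ is $e$. *)

From HB Require Import structures.
From mathcomp Require Import all_boot all_order all_algebra.
From mathcomp Require Import mpoly.
Set Implicit Arguments. Unset Strict Implicit. Unset Printing Implicit Defensive.
Import GRing.Theory.
Local Open Scope ring_scope.

(* Variables x_1, ..., x_d are indexed by i : 'I_d, with x_{i+1} <-> i.
   A monomial of P_d = F[x_1..x_d] is 'X_[m] for an exponent vector m. *)

Definition in_ideal (R : comRingType) (S : R -> Prop) (p : R) : Prop :=
  exists s : seq (R * R),
    (forall cg, cg \in s -> S cg.2) /\ p = \sum_(cg <- s) cg.1 * cg.2.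

(* D_k : monomials of degree k in x_1..x_{k-1} (exponent 0 for x_j, j >= k,
   i.e. indices i with k-1 <= i) not divisible by x_{k-1}^2 (index k-2). *)
Definition inD (d k : nat) (m : 'X_{1..d}) : Prop :=
  [/\ mdeg m = k,
      (forall i : 'I_d, (k.-1 <= i)%N -> m i = 0%N)
    & (forall i : 'I_d, (i.+2 = k)%N -> (m i < 2)%N)].

Definition Kgen_mon (d : nat) (m : 'X_{1..d}) : Prop :=
  (exists i : 'I_d, m = (U_(i) *+ 3)%MM)
  \/ (exists k : nat, [/\ (3 <= k)%N, (k <= d.+1)%N & inD k m]).

Definition Kgen (F : fieldType) (d : nat) (p : {mpoly F[d]}) : Prop :=
  exists m : 'X_{1..d}, Kgen_mon m /\ p = 'X_[m].

Definition K_d (F : fieldType) (d : nat) (p : {mpoly F[d]}) : Prop :=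
  in_ideal (@Kgen F d) p.

(* m ends in x_j^e (j 1-based): no x_i with i > j, and exponent of x_j is e. *)
Definition ends_in (d : nat) (m : 'X_{1..d}) (j e : nat) : Prop :=
  (forall i : 'I_d, (j <= i)%N -> m i = 0%N) /\
  (forall i : 'I_d, i.+1 = j -> m i = e).

From HB Require Import structures.
From mathcomp Require Import all_boot all_order all_algebra.
From mathcomp Require Import mpoly.
From mathcomp Require Import zify.
Set Implicit Arguments. Unset Strict Implicit. Unset Printing Implicit Defensive.
Import GRing.Theory.

(* A monomial lies in the monomial ideal K_d iff one of the generating
   monomials divides it; call the others standard.  All exponents of a
   standard monomial are at most 2.  If m is standard of degree at most d, let
   x_p be the last variable with exponent below 2, so that every later
   variable has exponent 2.  Then m x_p is still standard, provided x_d occurs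
   in m when deg m = d.  Indeed, a generator of D_k dividing m x_p must
   involve x_p, so each of the d + 1 - k variables x_k, ..., x_d has
   exponent 2 in m x_p but does not occur in the generator; for k <= d this
   forces deg m >= d + 1, and for k = d + 1 the generator has exponent at most
   1 in x_d where m x_p has exponent 2, forcing deg m > d.  Starting from
   deg m <= d - 1 and repeating reaches degree d with x_d present, which is
   (a).  For (b), x_d occurs in m since otherwise m itself would lie in D_d
   (or, for d <= 2, have degree < d). *)

Lemma in_idealX (R : comNzRingType) n (S : 'X_{1..n} -> Prop) (m : 'X_{1..n}) :
  in_ideal (fun p : {mpoly R[n]} => exists g, S g /\ p = 'X_[g]) 'X_[m] <->
  exists2 g, S g & (g <= m)%MM.
Proof.
split=> [[s [hs eX]] | [g Sg le_gm]]; last first.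
  exists [:: ('X_[m - g], 'X_[g])]; split.
    by move=> cg; rewrite mem_seq1 => /eqP -> /=; exists g.
  by rewrite big_seq1 /= -mpolyXD submK.
have : has (fun cg => m \in msupp (cg.1 * cg.2)%R) s.
  apply/negPn/negP => /hasPn none.
  have := congr1 (mcoeff m) eX; rewrite mcoeffX eqxx raddf_sum /= big1_seq.
    by move/eqP; rewrite oner_eq0.
  by move=> cg /none /memN_msupp_eq0.
case/hasP=> [[c x] /hs [g [Sg /= ->]]].
rewrite (perm_mem (msuppMX c g)) => /mapP [m' _ ->].
by exists g; last exact: lem_addr.
Qed.

Lemma lepm_dvdX (R : comNzRingType) n (m mt : 'X_{1..n}) :
  (m <= mt)%MM -> exists q : {mpoly R[n]}, 'X_[mt] = (q * 'X_[m])%R.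
Proof. by move=> le_m_mt; exists 'X_[mt - m]; rewrite -mpolyXD submK. Qed.

Definition standard d (m : 'X_{1..d}) : Prop :=
  forall g, Kgen_mon g -> ~~ (g <= m)%MM.

Lemma notin_K_standard (F : fieldType) d (m : 'X_{1..d}) :
  ~ K_d (F:=F) 'X_[m] <-> standard m.
Proof.
split=> [nK g Kg | st /in_idealX [g Kg]]; last by rewrite (negbTE (st g Kg)).
by apply/negP => le_gm; apply: nK; apply/in_idealX; exists g.
Qed.

Lemma standard_le2 d (m : 'X_{1..d}) : standard m -> forall i, m i <= 2.
Proof.
move=> st i; rewrite leqNgt; apply/negP => gt2.
have /negP := st _ (or_introl (ex_intro _ i erefl)); apply.
by apply/mnm_lepP => j; rewrite mulmnE mnm1E; case: eqP => [<-|].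
Qed.

Lemma mdeg_subm d (g m : 'X_{1..d}) :
  (g <= m)%MM -> mdeg m = mdeg g + mdeg (m - g).
Proof. by move=> le_gm; rewrite -mdegD addmC submK. Qed.

Lemma mnm_le_mdeg d (m : 'X_{1..d}) i : m i <= mdeg m.
Proof. by rewrite mdegE (bigD1 i) //= leq_addr. Qed.

Definition saturated_after d (m : 'X_{1..d}) (p : 'I_d) : Prop :=
  forall i : 'I_d, p < i -> m i = 2.

Lemma last_unsaturated d (m : 'X_{1..d}) :
  (forall i, m i <= 2) -> mdeg m < 2 * d ->
  exists p, m p < 2 /\ saturated_after m p.
Proof.
move=> le2 deg_lt.
have [i0 lt_i0] : exists i, m i < 2.
  apply/existsP; apply: contraLR deg_lt; rewrite negb_exists -leqNgt => /forallP ge2.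
  rewrite mdegE mulnC -[X in X * 2]card_ord -sum_nat_const.
  by apply: leq_sum => i _; rewrite leqNgt ge2.
have [p lt_p p_max] := @arg_maxnP _ i0 (fun i => m i < 2) val lt_i0.
exists p; split=> // i lt_pi; apply/eqP; rewrite eqn_leq le2 leqNgt.
by apply/negP => /p_max /=; rewrite leqNgt lt_pi.
Qed.

Section LastVariable.
Variable n : nat.
Implicit Types (m g : 'X_{1..n.+1}) (p : 'I_n.+1).

Lemma addU_last m p : saturated_after m p ->
  (m + U_(p))%MM ord_max = if p == ord_max then (m ord_max).+1 else 2.
Proof.
move=> sat; rewrite mnmDE mnm1E; case: (eqVneq p ord_max) => [_ | ne].
  by rewrite addn1.
rewrite addn0 sat // ltn_neqAle -ltnS ltn_ord andbT.
by move: ne; rewrite -(inj_eq val_inj).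
Qed.

Lemma standard_addU m p :
  standard m -> m p < 2 -> saturated_after m p -> mdeg m <= n.+1 ->
  (mdeg m = n.+1 -> 0 < m ord_max) -> standard (m + U_(p)).
Proof.
move=> st lt_p sat deg_le last_pos.
set m' := (m + U_(p))%MM.
have m'E j : m' j = m j + (p == j) by rewrite mnmDE mnm1E.
have deg_m' : mdeg m' = (mdeg m).+1 by rewrite mdegD mdeg1 addn1.
move=> g [[i ->] | [k [k3 kn [deg_g g0 g1]]]]; apply/negP => le_gm'.
  have := mnm_lepP le_gm' i; rewrite mulmnE mnm1E eqxx m'E.
  by have := standard_le2 st i; case: eqP => [<- | _]; lia.
have [le_kp | lt_pk] := leqP k.-1 p.
  have /negP := st g (or_intror (ex_intro _ k (And3 k3 kn (And3 deg_g g0 g1)))).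
  apply; apply/mnm_lepP => j; have := mnm_lepP le_gm' j; rewrite m'E.
  by case: eqP => [<- | _]; rewrite ?(g0 p le_kp) ?addn0.
(* Every variable of index j >= k.-1 is saturated in m' but absent from g. *)
have := mdeg_subm le_gm'; rewrite deg_m' deg_g.
have [lt_k | ge_k] := ltnP k n.+2.
  have excess : 2 * (n.+1 - k.-1) <= mdeg (m' - g).
    rewrite mdegE (bigID (fun j : 'I_n.+1 => k.-1 <= j)) /=.
    apply: leq_trans (leq_addr _ _); rewrite mulnC -sum_nat_const_nat big_geq_mkord.
    apply: leq_sum => j le_kj; rewrite mnmBE g0 // subn0 m'E sat; last by lia.
    by case: eqP => [e|]; [lia | rewrite addn0].
  lia.
move=> deg_eq; have deg_m : mdeg m = n.+1 by lia.
have k_eq : k = n.+2 by lia.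
have m'_max : m' ord_max = 2.
  rewrite /m' addU_last //; case: (eqVneq p ord_max) => [p_max | _] //.
  by move: lt_p (last_pos deg_m); rewrite p_max; lia.
have := mnm_le_mdeg (m' - g) ord_max; rewrite mnmBE m'_max.
have := g1 ord_max (esym k_eq).
lia.
Qed.

Lemma standard_fill m : standard m -> mdeg m <= n ->
  exists mt, [/\ (m <= mt)%MM, mdeg mt = n.+1, 0 < mt ord_max & standard mt].
Proof.
have [r] := ubnP (n - mdeg m); elim: r m => // r IH m lt_r st le_deg.
have [p [lt_p sat]] :=
  last_unsaturated (standard_le2 st) (ltac:(lia) : mdeg m < 2 * n.+1).
set m1 := (m + U_(p))%MM.
have st1 : standard m1 by apply: standard_addU => //; [exact: leqW | lia].
have pos1 : 0 < m1 ord_max by rewrite /m1 addU_last //; case: ifP.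
have deg1 : mdeg m1 = (mdeg m).+1 by rewrite mdegD mdeg1 addn1.
have le_m_m1 : (m <= m1)%MM := lem_addr m U_(p).
have [lt_n | ge_n] := ltnP (mdeg m) n; last by exists m1; split => //; lia.
have [mt [le_m1_mt deg_mt pos_mt st_mt]] := IH m1 ltac:(lia) st1 ltac:(lia).
by exists mt; split => //; apply: lepm_trans le_m1_mt.
Qed.

Lemma standard_last_gt0 m :
  standard m -> mdeg m = n.+1 -> ~ ends_in m n 2 -> 0 < m ord_max.
Proof.
move=> st deg_m not_end; rewrite lt0n; apply/negP => /eqP m0; apply: not_end.
have m_tail (i : 'I_n.+1) : n <= i -> m i = 0.
  move=> le_ni; rewrite -m0; congr (m _).
  by apply: val_inj => /=; have := ltn_ord i; lia.
split=> // i iSn; apply/eqP; rewrite eqn_leq standard_le2 //= leqNgt; apply/negP => lt_i.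
have [lt1n | le_n1] := ltnP 1 n.
  have Dm : inD n.+1 m.
    split=> // j jSn; suff -> : j = i by [].
    by apply: val_inj => /=; lia.
  have /negP := st m (or_intror (ex_intro _ n.+1 (And3 lt1n (leqnSn _) Dm))).
  by apply; exact: lepm_refl.
move: deg_m; rewrite mdegE (bigD1 i) //= big1 => [|j]; first lia.
by rewrite -(inj_eq val_inj) /= => ne_ji; apply: m_tail; lia.
Qed.

Lemma ends_in_last m : ends_in m n.+1 (m ord_max).
Proof.
split=> i; first by rewrite leqNgt ltn_ord.
by move=> iSn; congr (m _); apply: val_inj; case: iSn.
Qed.

End LastVariable.

Local Open Scope ring_scope.

Theorem mainTheorem11 (F : fieldType) (d : nat) (hd : (1 <= d)%N)
    (m : 'X_{1..d}) (hm : ~ K_d (F:=F) 'X_[m]) :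
  ((mdeg m <= d.-1)%N ->
     exists mt : 'X_{1..d},
       [/\ exists q : {mpoly F[d]}, 'X_[mt] = q * 'X_[m],
           mdeg mt = d,
           ~ K_d (F:=F) 'X_[mt]
         & ends_in mt d 1 \/ ends_in mt d 2])
  /\
  (mdeg m = d -> ~ ends_in m d.-1 2 ->
     exists mt : 'X_{1..d},
       [/\ exists q : {mpoly F[d]}, 'X_[mt] = q * 'X_[m],
           mdeg mt = d.+1
         & ~ K_d (F:=F) 'X_[mt]]).
Proof.
case: d hd m hm => [// | n] _ m /notin_K_standard st.
split=> [le_deg | deg_m not_end].
  have [mt [le_m_mt deg_mt pos_mt st_mt]] := standard_fill st le_deg.
  exists mt; split => //; first exact: lepm_dvdX.
    exact/notin_K_standard.
  have := ends_in_last mt; have := standard_le2 st_mt ord_max.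
  by case: (mt ord_max) pos_mt => [|[|[|]]] //= _ _ end_mt; [left | right].
have [p [lt_p sat]] :=
  last_unsaturated (standard_le2 st) (ltac:(lia) : (mdeg m < 2 * n.+1)%N).
exists (m + U_(p))%MM; split.
- exact/lepm_dvdX/lem_addr.
- by rewrite mdegD mdeg1 deg_m addn1.
- apply/notin_K_standard/standard_addU => //; first by rewrite deg_m.
  by move=> _; apply: standard_last_gt0.
Qed.
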